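(* Let $\varphi(x)=\sum_{i\ge0}\gamma_ix^i\in\mathbb{K}[[x]]$, let $r\in\mathbb{Z}$, and stipulate $\gamma_i=0$ for $i<0$. Then $\varphi\in\mathcal{F}_r$ if and only if the following hold. If $r=2k$ is even: for each $n\ge\max\{0,-k\}$, $$\gamma_{2n+1}=\sum_{i=-k}^n{n+k\brack i+k}\gamma_{2i},$$ and, if $k<0$, then for $0\le n\le -k-1$, $$\gamma_{2n+1}=\sum_{i=0}^n-{-k-i\brack -k-n}\gamma_{2i}.$$ If $r=2k+1$ is odd: for each $n\ge\max\{0,-k\}$, $$\gamma_{2n+1}=\sum_{i=-k}^n{n+k\brace i+k}\gamma_{2i},$$ and, if $k<0$, then for $0\le n\le -k-1$, $$\gamma_{2n+1}=\sum_{i=0}^n-{-k-i-1\brace -k-n-1}\gamma_{2i}.$$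
   Context: $\mathbb{K}\in\{\mathbb{Q},\mathbb{R},\mathbb{C}\}$. For $r\in\mathbb{Z}$, $\mathcal{F}_r$ denotes the space of $\varphi\in\mathbb{K}[[x]]$ with $\varphi(x/(x-1))=(1-x)^r\varphi(x)$. The Euler polynomials $E_n(x)$ are defined by $\frac{2e^{xt}}{e^t+1}=\sum_{n\ge0}E_n(x)\frac{t^n}{n!}$. For integers $N\ge0$, define ${N\brack j}$ by $\sum_{j=1}^N{N\brack j}x^{2j-1}=x^{2N}-E_{2N}(x)$ and ${N\brace j}$ by $\sum_{j=0}^N{N\brace j}x^{2j}=x^{2N+1}-E_{2N+1}(x)$ (negatives of the odd-degree coefficients of $E_{2N}$, resp. even-degree coefficients of $E_{2N+1}$); set ${N\brack j}=0$ for $j\le0$ or $j>N$, and ${N\brace j}=0$ for $j<0$ or $j>N$. *)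

From HB Require Import structures.
From mathcomp Require Import all_boot all_order all_algebra.
Set Implicit Arguments. Unset Strict Implicit. Unset Printing Implicit Defensive.
Import Order.TTheory GRing.Theory Num.Theory.
Local Open Scope ring_scope.

Section Defs.
Variable K : numFieldType.

Definition ps := nat -> K.

Definition ps_mul (f g : ps) : ps := fun n => \sum_(i < n.+1) f i * g (n - i)%N.
Definition ps_one : ps := fun n => (n == 0%N)%:R.
Definition ps_X : ps := fun n => (n == 1%N)%:R.
Definition ps_opp (f : ps) : ps := fun n => - f n.
Definition ps_exp (f : ps) (k : nat) : ps := iter k (ps_mul f) ps_one.

(* 1 - x and its inverse 1/(1-x) = sum_n x^n (geometric series). *)
Definition ps_1mX : ps := fun n => ps_one n - ps_X n.
Definition ps_geom : ps := fun _ => 1.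

Definition ps_1mX_pow (r : int) : ps :=
  match r with
  | Posz m => ps_exp ps_1mX m
  | Negz m => ps_exp ps_geom m.+1
  end.

(* x/(x-1) = - x * 1/(1-x). *)
Definition ps_xdiv : ps := ps_opp (ps_mul ps_X ps_geom).

(* Composition phi(g(x)) for g with zero constant term: the coefficient of
   x^n only involves the terms phi_i g^i with i <= n. *)
Definition ps_comp (phi g : ps) : ps :=
  fun n => \sum_(i < n.+1) phi i * ps_exp g i n.

Definition in_F (r : int) (phi : ps) : Prop :=
  forall n, ps_comp phi ps_xdiv n = ps_mul (ps_1mX_pow r) phi n.

(* Euler polynomials: coefficient comparison in
   2 e^{xt} = (e^t + 1) sum_n E_n(x) t^n/n!  gives
   sum_{k<=n} C(n,k) E_k(x) + E_n(x) = 2 x^n, i.e.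
   E_n = x^n - 1/2 sum_{k<n} C(n,k) E_k. *)
Fixpoint euler_list (n : nat) : seq {poly K} :=
  match n with
  | 0%N => [:: 1]
  | n'.+1 =>
      let l := euler_list n' in
      rcons l ('X^n - 2^-1 *: \sum_(k < n) ('C(n, k))%:R *: l`_k)
  end.
Definition euler_poly (n : nat) : {poly K} := (euler_list n)`_n.

Definition brack_poly (N : nat) : {poly K} := 'X^(N.*2) - euler_poly (N.*2).
Definition brace_poly (N : nat) : {poly K} := 'X^((N.*2).+1) - euler_poly ((N.*2).+1).

(* {N brack j}: sum_{j=1}^N {N brack j} x^(2j-1) = x^(2N) - E_(2N)(x),
   zero for j <= 0 or j > N (and for N < 0, which never occurs). *)
Definition ebrack (N j : int) : K :=
  match N with
  | Posz N' => if (1 <= j) && (j <= N'%:Z)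
               then let e : int := 2 * j - 1 in (brack_poly N')`_(absz e)
               else 0
  | Negz _ => 0
  end.

(* {N brace j}: sum_{j=0}^N {N brace j} x^(2j) = x^(2N+1) - E_(2N+1)(x),
   zero for j < 0 or j > N. *)
Definition ebrace (N j : int) : K :=
  match N with
  | Posz N' => if (0 <= j) && (j <= N'%:Z)
               then let e : int := 2 * j in (brace_poly N')`_(absz e)
               else 0
  | Negz _ => 0
  end.

Definition gZ (gam : ps) (i : int) : K :=
  match i with Posz m => gam m | Negz _ => 0 end.

Definition zsum (a b : int) (F : int -> K) : K :=
  if a <= b then \sum_(0 <= t < absz (b - a + 1)) F (a + t%:Z) else 0.

End Defs.

From HB Require Import structures.
From mathcomp Require Import all_boot all_order all_algebra.
From mathcomp Require Import boolp ring zify.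
Import Order.TTheory GRing.Theory Num.Theory.
Local Open Scope ring_scope.
Set Implicit Arguments. Unset Strict Implicit. Unset Printing Implicit Defensive.

(* Comparing coefficients, phi is in F_r iff
     gamma_n = sum_(i <= n) (-1)^i [x^(n-i)] (1-x)^(-r-i) gamma_i   for all n.
   For the shifted sequence b_N = gamma_(N+1-r) this is the signed binomial
   system b_N = +-sum_I (-1)^I C(N, I) b_I, and when r <= 0 the coefficients
   gamma_0, ..., gamma_(-r) must in addition satisfy
   gamma_n = (-1)^n sum_i C(-r-i, n-i) gamma_i.  Both systems are triangular
   with diagonal entries +-1 alternating with the parity of the index, so the
   entries of one parity are free and the others are determined by them.  The
   explicit solution is built from the Euler numbers E_m(0): their generating
   function 2/(e^t+1) gives sum_l C(M, l) E_l(0) = (-1)^M E_M(0) and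
   E_2m(0) = 0 for m > 0, and since [x^j] E_n(x) = C(n, j) E_(n-j)(0), the
   coefficients of the solution are the numbers {N brack j} and {N brace j}. *)

Section BigSums.
Variable R : nmodType.
Implicit Types F : nat -> R.

Lemma sum_drop_zero_prefix F j n : (j <= n)%N -> (forall k, (k < j)%N -> F k = 0) ->
  \sum_(k < n) F k = \sum_(l < n - j) F (j + l)%N.
Proof.
move=> jn F0; rewrite -!(big_mkord xpredT) (@big_cat_nat _ _ _ j) //=.
rewrite big_nat big1 ?add0r; last by move=> k /andP [_ /F0].
by rewrite -{1}[j]add0n big_addn big_mkord; apply: eq_bigr => i _; rewrite addnC.
Qed.

Lemma sum_extend_zero F n m : (n <= m)%N -> (forall a, (n < a <= m)%N -> F a = 0) ->
  \sum_(a < n.+1) F a = \sum_(a < m.+1) F a.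
Proof.
elim: m => [|m IH]; first by rewrite leqn0 => /eqP ->.
rewrite leq_eqVlt => /orP [/eqP -> //|]; rewrite ltnS => nm F0.
rewrite [RHS]big_ord_recr /= F0 ?addr0; last by rewrite ltnS nm /=.
apply: IH => // a /andP [na am].
by rewrite F0 // na (leq_trans am).
Qed.

Lemma sum_odd_ord F m :
  \sum_(a < m.*2.+1 | odd a) F a = \sum_(j < m) F j.*2.+1.
Proof.
rewrite big_mkcond; elim: m => [|m IH]; first by rewrite big_ord1 big_ord0.
rewrite [RHS]big_ord_recr -IH doubleS !big_ord_recr /= odd_double /=.
by rewrite addr0.
Qed.

Lemma sum_even_ord F m :
  \sum_(a < m.*2.+2 | ~~ odd a) F a = \sum_(j < m.+1) F j.*2.
Proof.
rewrite big_mkcond; elim: m => [|m IH].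
  by rewrite !big_ord_recr !big_ord0 /= !add0r addr0.
rewrite [RHS]big_ord_recr -IH doubleS !big_ord_recr /= odd_double /=.
by rewrite addr0.
Qed.

End BigSums.

Lemma bin_trinomial n k j : (j <= k)%N -> (k <= n)%N ->
  ('C(n, k) * 'C(k, j) = 'C(n, j) * 'C(n - j, k - j))%N.
Proof.
move=> jk kn; have jn : (j <= n)%N := leq_trans jk kn.
have facts_gt0 : (0 < j`! * (k - j)`! * (n - k)`!)%N by rewrite !muln_gt0 !fact_gt0.
apply/eqP; rewrite -(eqn_pmul2r facts_gt0); apply/eqP.
have nk_sub : (n - j - (k - j) = n - k)%N by lia.
transitivity n`!; first by rewrite -(bin_fact kn) -(bin_fact jk); ring.
rewrite -(bin_fact jn) -(bin_fact (leq_sub2r j kn)) nk_sub; ring.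
Qed.

Section PowerSeriesRing.
Variable K : numFieldType.
Implicit Types f g h : ps K.

Definition ps_add f g : ps K := fun n => f n + g n.
Definition ps_zero : ps K := fun _ => 0.

Lemma ps_addA : associative ps_add.
Proof. by move=> f g h; apply/funext=> n; rewrite /ps_add addrA. Qed.
Lemma ps_addC : commutative ps_add.
Proof. by move=> f g; apply/funext=> n; rewrite /ps_add addrC. Qed.
Lemma ps_add0 : left_id ps_zero ps_add.
Proof. by move=> f; apply/funext=> n; rewrite /ps_add /ps_zero add0r. Qed.
Lemma ps_addN : left_inverse ps_zero (@ps_opp K) ps_add.
Proof. by move=> f; apply/funext=> n; rewrite /ps_add /ps_zero /ps_opp addNr. Qed.

HB.instance Definition _ := gen_eqMixin (ps K).
HB.instance Definition _ := gen_choiceMixin (ps K).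
HB.instance Definition _ :=
  GRing.isZmodule.Build (ps K) ps_addA ps_addC ps_add0 ps_addN.

Definition ps_trunc (m : nat) f : {poly K} := \poly_(i < m.+1) f i.

Lemma coef_ps_trunc m f i : (i <= m)%N -> (ps_trunc m f)`_i = f i.
Proof. by move=> im; rewrite coef_poly ltnS im. Qed.

(* The Cauchy product agrees with the polynomial product of any truncation
   beyond the index, which transports the ring laws from [{poly K}]. *)
Lemma ps_mul_trunc m f g n :
  (n <= m)%N -> ps_mul f g n = (ps_trunc m f * ps_trunc m g)`_n.
Proof.
move=> nm; rewrite coefM; apply: eq_bigr => -[i /= ltin] _.
have le_im : (i <= m)%N by rewrite (leq_trans _ nm) // -ltnS.
by rewrite !coef_ps_trunc // (leq_trans (leq_subr _ _) nm).
Qed.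

Lemma ps_mulC : commutative (@ps_mul K).
Proof. by move=> f g; apply/funext=> n; rewrite !(ps_mul_trunc _ _ (leqnn n)) mulrC. Qed.

Lemma ps_mulA : associative (@ps_mul K).
Proof.
move=> f g h; apply/funext=> n.
transitivity ((ps_trunc n f * (ps_trunc n g * ps_trunc n h))`_n).
  rewrite coefM; apply: eq_bigr => -[i /= lt_in] _.
  by rewrite (ps_mul_trunc _ _ (leq_subr i n)) coef_ps_trunc.
rewrite mulrA coefM; apply: eq_bigr => -[i /=]; rewrite ltnS => le_in _.
by rewrite (ps_mul_trunc _ _ le_in) coef_ps_trunc // leq_subr.
Qed.

Lemma ps_mulDl : left_distributive (@ps_mul K) ps_add.
Proof.
move=> f g h; apply/funext=> n; rewrite /ps_add /ps_mul -big_split /=.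
by apply: eq_bigr => i _; rewrite mulrDl.
Qed.

Lemma ps_mul1 : left_id (@ps_one K) (@ps_mul K).
Proof.
move=> f; apply/funext=> n; rewrite /ps_mul big_ord_recl /ps_one /= mul1r subn0.
by rewrite big1 ?addr0 // => i _; rewrite mul0r.
Qed.

Lemma ps_one_neq0 : ps_one K != 0.
Proof.
apply/eqP => /(congr1 (fun f : ps K => f 0%N)) /eqP.
by rewrite /ps_one oner_eq0.
Qed.

HB.instance Definition _ := GRing.Zmodule_isComNzRing.Build (ps K)
  ps_mulA ps_mulC ps_mul1 ps_mulDl ps_one_neq0.

Lemma coef_psD f g n : (f + g) n = f n + g n. Proof. by []. Qed.
Lemma coef_psN f n : (- f) n = - f n. Proof. by []. Qed.
Lemma coef_psB f g n : (f - g) n = f n - g n. Proof. by []. Qed.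
Lemma coef_ps1 n : (1 : ps K) n = (n == 0)%:R. Proof. by []. Qed.
Lemma coef_psM f g n : (f * g) n = \sum_(i < n.+1) f i * g (n - i)%N.
Proof. by []. Qed.
Lemma ps_expE f k : ps_exp f k = f ^+ k.
Proof. by elim: k => // k IH; rewrite exprS -IH. Qed.

Lemma coef_psMsign i f n : ((-1) ^+ i * f) n = (-1) ^+ i * f n.
Proof.
elim: i => [|i IH]; first by rewrite !expr0 !mul1r.
by rewrite !exprS -!mulrA mulN1r coef_psN IH mulN1r.
Qed.

Lemma coef_psMX f n : (ps_X K * f) n = if n is n'.+1 then f n' else 0.
Proof.
rewrite coef_psM; case: n => [|n]; first by rewrite big_ord1 /ps_X mul0r.
rewrite big_ord_recl /ps_X /= mul0r add0r big_ord_recl /= mul1r subn1 /=.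
by rewrite big1 ?addr0 // => i _; rewrite mul0r.
Qed.

Lemma coef_psMXn i f n :
  (ps_X K ^+ i * f) n = if (i <= n)%N then f (n - i)%N else 0.
Proof.
elim: i f n => [|i IH] f n; first by rewrite expr0 mul1r subn0.
rewrite exprSr -mulrA IH; case: (leqP i n) => [le_in|lt_ni]; last first.
  by rewrite ifF //; apply/negbTE; rewrite -ltnNge ltnW.
rewrite coef_psMX; case: ltnP => [lt_in|le_ni].
  by have -> : (n - i = (n - i.+1).+1)%N by lia.
by have -> : (n - i = 0)%N by lia.
Qed.

Lemma coef_psMgeom f n : (f * ps_geom K) n = \sum_(i < n.+1) f i.
Proof. by apply: eq_bigr => i _; rewrite /ps_geom mulr1. Qed.

Lemma ps_mulIr0 (c d : ps K) : c 0%N != 0 -> d * c = 0 -> d = 0.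
Proof.
move=> c0 dc0; apply/funext => n; elim/ltn_ind: n => n IH.
move/(congr1 (fun f : ps K => f n)): dc0; rewrite coef_psM big_ord_recr /= subnn.
rewrite big1 ?add0r => [/eqP|[i lt_in] _]; last by rewrite IH // mul0r.
by rewrite mulf_eq0 (negbTE c0) orbF => /eqP.
Qed.

End PowerSeriesRing.

Section OneMinusXPowers.
Variable K : numFieldType.
Implicit Types f : ps K.
Local Notation pw := (ps_1mX_pow K).

Lemma ps_1mX_geom : ps_1mX K * ps_geom K = 1.
Proof.
apply/funext=> -[|j]; rewrite coef_psMgeom coef_ps1.
  by rewrite big_ord1 /ps_1mX /ps_one /ps_X subr0.
rewrite 2!big_ord_recl big1 => [|i _]; rewrite /ps_1mX /ps_one /ps_X /bump /=.
  by rewrite subr0 sub0r addr0 subrr.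
by rewrite subr0.
Qed.

Lemma ps_1mX_powE a :
  pw a = match a with Posz m => ps_1mX K ^+ m | Negz m => ps_geom K ^+ m.+1 end.
Proof. by case: a => m; rewrite /ps_1mX_pow ps_expE. Qed.

Lemma ps_1mX_pow0 : pw 0 = 1. Proof. by []. Qed.

Lemma ps_1mX_powS a : pw (a + 1) = ps_1mX K * pw a.
Proof.
case: a => [m|[|m]].
- by rewrite -[1]/(1%N : int) -PoszD addn1 !ps_1mX_powE exprS.
- by rewrite [Negz 0 + 1]/= !ps_1mX_powE expr1 ps_1mX_geom.
- have -> : Negz m.+1 + 1 = Negz m by rewrite !NegzE; lia.
  by rewrite !ps_1mX_powE [_ ^+ m.+2]exprS mulrA ps_1mX_geom mul1r.
Qed.

Lemma ps_1mX_pow_pred a : pw a = ps_geom K * pw (a + 1).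
Proof. by rewrite ps_1mX_powS mulrA [ps_geom K * _]mulrC ps_1mX_geom mul1r. Qed.

Lemma ps_1mX_powD a b : pw (a + b) = pw a * pw b.
Proof.
elim/int_rect: b => [|n IH|n IH]; first by rewrite addr0 ps_1mX_pow0 mulr1.
  by rewrite -addn1 PoszD addrA !ps_1mX_powS IH mulrCA.
have succ_opp : - (n.+1)%:Z + 1 = - n%:Z by lia.
by rewrite (ps_1mX_pow_pred (a + _)) (ps_1mX_pow_pred (- _)) -addrA succ_opp IH mulrCA.
Qed.

Lemma coef_ps_1mX_pow_nat (m j : nat) : pw m j = (-1) ^+ j * 'C(m, j)%:R.
Proof.
elim: m j => [|m IH] j.
  by rewrite ps_1mX_pow0 coef_ps1 bin0n; case: j => [|j]; rewrite ?mulr1 ?mulr0.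
rewrite ps_1mX_powE exprS -(ps_1mX_powE m) {1}/ps_1mX mulrBl mul1r coef_psB.
rewrite coef_psMX IH; case: j => [|j]; first by rewrite !bin0 subr0.
by rewrite IH binS natrD exprS; ring.
Qed.

Lemma coef_ps_1mX_pow_Negz (m j : nat) : pw (Negz m) j = 'C(m + j, j)%:R.
Proof.
elim: m j => [|m IH] j.
  by rewrite ps_1mX_powE expr1 /ps_geom add0n binn.
rewrite ps_1mX_powE exprS mulrC -(ps_1mX_powE (Negz m)) coef_psMgeom.
under eq_bigr do rewrite IH.
elim: j => [|j IHj]; first by rewrite big_ord1 !addn0 !bin0.
by rewrite big_ord_recr /= IHj -natrD addnS addSn binS addnS addnC.
Qed.

Lemma ps_xdiv_expE i :
  ps_exp (ps_xdiv K) i = (-1) ^+ i * (ps_X K ^+ i * pw (- i%:Z)).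
Proof.
have -> : pw (- i%:Z) = ps_geom K ^+ i.
  by case: i => [|i]; rewrite ?oppr0 // -NegzE ps_1mX_powE.
have -> : ps_xdiv K = -1 * (ps_X K * ps_geom K) by rewrite mulN1r.
by rewrite ps_expE !exprMn.
Qed.

(* Multiplying by (1-x)^-r, the identity defining F_r becomes a triangular
   system for the coefficients, because (x/(x-1))^i = (-1)^i x^i (1-x)^-i. *)
Lemma coef_ps_1mX_pow_comp r f n :
  (pw (- r) * ps_comp f (ps_xdiv K)) n =
  \sum_(i < n.+1) f i * ((-1) ^+ i * pw (- r - i%:Z) (n - i)%N).
Proof.
have comp_widen m : (m <= n)%N -> ps_comp f (ps_xdiv K) m =
    \sum_(i < n.+1) f i * ps_exp (ps_xdiv K) i m.
  move=> mn; rewrite /ps_comp (@sum_extend_zero _ (fun i => f i * ps_exp _ i m) _ _ mn) //.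
  move=> i /andP [lt_mi _].
  by rewrite ps_xdiv_expE coef_psMsign coef_psMXn leqNgt lt_mi !mulr0.
rewrite mulrC coef_psM.
transitivity (\sum_(m < n.+1)
    (\sum_(i < n.+1) f i * ps_exp (ps_xdiv K) i m) * pw (- r) (n - m)%N).
  by apply: eq_bigr => -[m /=]; rewrite ltnS => le_mn _; rewrite comp_widen.
under eq_bigr do rewrite mulr_suml.
rewrite exchange_big; apply: eq_bigr => -[i /=]; rewrite ltnS => le_in _.
transitivity (f i * (ps_exp (ps_xdiv K) i * pw (- r)) n).
  by rewrite coef_psM mulr_sumr; apply: eq_bigr => m _; rewrite mulrA.
rewrite ps_xdiv_expE -!mulrA -ps_1mX_powD coef_psMsign coef_psMXn le_in.
by rewrite addrC.
Qed.

Lemma in_F_coefE r f : in_F r f <->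
  forall n, f n = \sum_(i < n.+1) f i * ((-1) ^+ i * pw (- r - i%:Z) (n - i)%N).
Proof.
split=> [inF n | fix_f].
  have comp_f : ps_comp f (ps_xdiv K) = pw r * f by apply/funext.
  by rewrite -coef_ps_1mX_pow_comp comp_f mulrA -ps_1mX_powD addNr mul1r.
have f_eq : f = pw (- r) * ps_comp f (ps_xdiv K).
  by apply/funext=> n; rewrite coef_ps_1mX_pow_comp -fix_f.
have comp_f : ps_comp f (ps_xdiv K) = pw r * f.
  by rewrite {2}f_eq mulrA -ps_1mX_powD addrN mul1r.
by move=> n; rewrite comp_f.
Qed.

End OneMinusXPowers.

Section EulerNumbers.
Variable K : numFieldType.
Implicit Types f g : ps K.

Definition euler0 (m : nat) : K := (euler_poly K m)`_0.

(* E_l(1), by the symmetry E_l(1 - x) = (-1)^l E_l(x). *)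
Definition euler1 (l : nat) : K := (-1) ^+ l * euler0 l.

Lemma size_euler_list n : size (euler_list K n) = n.+1.
Proof. by elim: n => // n IH; rewrite /= size_rcons IH. Qed.

Lemma nth_euler_list n k : (k <= n)%N -> (euler_list K n)`_k = euler_poly K k.
Proof.
elim: n => [|n IH]; first by rewrite leqn0 => /eqP ->.
rewrite leq_eqVlt => /orP [/eqP -> //|]; rewrite ltnS => le_kn.
by rewrite /= nth_rcons size_euler_list ltnS le_kn IH.
Qed.

Lemma coef_euler_polyS n j : (euler_poly K n.+1)`_j =
  (j == n.+1)%:R - 2^-1 * \sum_(k < n.+1) 'C(n.+1, k)%:R * (euler_poly K k)`_j.
Proof.
rewrite {1}/euler_poly /= nth_rcons size_euler_list ltnn eqxx.
rewrite coefB coefXn coefZ coef_sum; congr (_ - _ * _).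
by apply: eq_bigr => -[k lt_kn] _; rewrite coefZ nth_euler_list.
Qed.

Lemma euler0_0 : euler0 0 = 1.
Proof. by rewrite /euler0 /euler_poly /= coef1. Qed.

Lemma euler0S m :
  euler0 m.+1 = - (2^-1 * \sum_(k < m.+1) 'C(m.+1, k)%:R * euler0 k).
Proof. by rewrite /euler0 coef_euler_polyS sub0r. Qed.

Lemma euler0_rec m :
  \sum_(k < m.+1) 'C(m, k)%:R * euler0 k + euler0 m = 2 * (m == 0)%:R.
Proof.
case: m => [|m]; first by rewrite big_ord1 bin0 mul1r euler0_0 mulr1.
rewrite big_ord_recr /= binn mul1r mulr0 euler0S.
have two_neq0 : (2 : K) != 0 by rewrite pnatr_eq0.
by field.
Qed.

Lemma coef_euler_poly n j : (euler_poly K n)`_j = 'C(n, j)%:R * euler0 (n - j).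
Proof.
elim/ltn_ind: n j => -[|n] IH j.
  by case: j => [|j]; rewrite /euler0 ?bin0 ?mul1r // /euler_poly /= coef1 bin0n mul0r.
rewrite coef_euler_polyS; have [le_jn|lt_nj] := leqP j n; last first.
  rewrite big1 ?mulr0 ?subr0 => [|[k lt_kn] _]; last first.
    by rewrite IH // (@bin_small k j) ?mul0r ?mulr0 //; apply: leq_trans lt_kn lt_nj.
  case: (ltngtP j n.+1) lt_nj => // [lt_jSn _|-> _]; first by rewrite bin_small ?mul0r.
  by rewrite binn subnn euler0_0 mulr1.
rewrite (ltn_eqF (leq_ltn_trans le_jn (ltnSn n))) sub0r subSn // euler0S.
rewrite (@sum_drop_zero_prefix _ (fun k => 'C(n.+1, k)%:R * (euler_poly K k)`_j) j n.+1)
  ?(leq_trans le_jn) // => [|k lt_kj]; last first.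
  by rewrite IH ?(@bin_small k j) ?mul0r ?mulr0 // ltnS (leq_trans (ltnW lt_kj)).
rewrite subSn // !mulrN; congr (- _); rewrite mulrCA; congr (_ * _).
rewrite mulr_sumr; apply: eq_bigr => -[l lt_l] _ /=.
have le_jln : (j + l <= n)%N by lia.
rewrite IH ?ltnS // addKn mulrA -natrM bin_trinomial ?leq_addr ?(leqW le_jln) //.
by rewrite addKn subSn // natrM mulrA.
Qed.

Lemma fact_neq0 n : (n`!%:R : K) != 0.
Proof. by rewrite pnatr_eq0 -lt0n fact_gt0. Qed.

Lemma invf_fact_mul n i : (i <= n)%N ->
  (i`!%:R)^-1 * ((n - i)`!%:R)^-1 = 'C(n, i)%:R / n`!%:R :> K.
Proof.
move=> le_in; have bin_neq0 : 'C(n, i)%:R != 0 :> K by rewrite pnatr_eq0 -lt0n bin_gt0.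
by rewrite -(bin_fact le_in) !natrM invfM mulrA divff // mul1r invfM.
Qed.

Definition egf (a : nat -> K) : ps K := fun n => a n / n`!%:R.
Definition ps_expt : ps K := egf (fun _ => 1).
Definition ps_flip (f : ps K) : ps K := fun n => (-1) ^+ n * f n.

Lemma ps_flipM f g : ps_flip (f * g) = ps_flip f * ps_flip g.
Proof.
apply/funext=> n; rewrite /ps_flip !coef_psM mulr_sumr.
by apply: eq_bigr => -[i lt_in] _ /=; rewrite mulrACA -exprD subnKC.
Qed.

Lemma ps_flipD f g : ps_flip (f + g) = ps_flip f + ps_flip g.
Proof. by apply/funext=> n; rewrite /ps_flip !coef_psD mulrDr. Qed.

Lemma ps_flip1 : ps_flip 1 = 1.
Proof. by apply/funext=> -[|n]; rewrite /ps_flip coef_ps1 ?mulr1 ?mulr0. Qed.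

Lemma ps_flip_expt : ps_flip ps_expt * ps_expt = 1.
Proof.
apply/funext=> n; rewrite coef_psM coef_ps1 /ps_flip /ps_expt /egf.
transitivity ((n`!%:R)^-1 * ((1 - 1) ^+ n : K)).
  rewrite exprBn mulr_sumr; apply: eq_bigr => -[i lt_in] _ /=.
  rewrite !expr1n !mulr1 !mul1r -mulrA invf_fact_mul // -mulr_natr; ring.
by case: n => [|n]; rewrite ?invr1 ?mulr1 // subrr expr0n mulr0.
Qed.

Definition euler0_egf : ps K := egf euler0.

Lemma euler0_egfE : euler0_egf * (ps_expt + 1) = 1 + 1.
Proof.
apply/funext=> n; rewrite mulrDr mulr1 !coef_psD coef_ps1 coef_psM.
transitivity ((\sum_(k < n.+1) 'C(n, k)%:R * euler0 k + euler0 n) / n`!%:R).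
  rewrite /euler0_egf /ps_expt /egf mulrDl mulr_suml; congr (_ + _).
  by apply: eq_bigr => -[i lt_in] _ /=; rewrite mul1r -mulrA invf_fact_mul //; ring.
by case: n => [|n]; rewrite euler0_rec /= ?invr1 ?mulr1 // !mulr0 mul0r addr0.
Qed.

Lemma euler0_egf_flip : euler0_egf * ps_expt = ps_flip euler0_egf.
Proof.
have flip_expt1 : ps_flip ps_expt + 1 = ps_flip (ps_expt + 1).
  by rewrite ps_flipD ps_flip1.
have prod0 : (euler0_egf * ps_expt - ps_flip euler0_egf) * (ps_flip ps_expt + 1) = 0.
  rewrite mulrBl -mulrA mulrDr mulr1 [ps_expt * _]mulrC ps_flip_expt flip_expt1.
  by rewrite -ps_flipM [1 + _]addrC euler0_egfE ps_flipD ps_flip1 subrr.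
apply/eqP; rewrite -subr_eq0; apply/eqP; apply: ps_mulIr0 prod0.
rewrite coef_psD coef_ps1 /ps_flip /ps_expt /egf /= expr0 !mul1r invr1.
by rewrite -(natrD _ 1 1) pnatr_eq0.
Qed.

Lemma euler0_eq0 n : ~~ odd n -> (0 < n)%N -> euler0 n = 0.
Proof.
move=> even_n n_gt0; have [m ->] : exists m, n = m.+1.*2.
  have n_eq : n = n./2.*2 by rewrite -[LHS]odd_double_half (negbTE even_n).
  by exists n./2.-1; lia.
(* For the generating function G: G(t) + G(-t) = G(t) (1 + e^t) = 2, so G - 1 is odd. *)
move: euler0_egfE; rewrite mulrDr mulr1 euler0_egf_flip.
move=> /(congr1 (fun f : ps K => f m.+1.*2)) /eqP.
rewrite !coef_psD coef_ps1 /ps_flip /euler0_egf /egf -signr_odd odd_double.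
rewrite expr0 mul1r addr0 -mulr2n mulrn_eq0 /= mulf_eq0 invr_eq0 (negbTE (fact_neq0 _)).
by rewrite orbF => /eqP.
Qed.

Lemma euler0_binom_sum M :
  \sum_(l < M.+1) 'C(M, l)%:R * euler0 l = (-1) ^+ M * euler0 M.
Proof.
rewrite -[LHS](addrK (euler0 M)) euler0_rec.
case: M => [|M]; first by rewrite euler0_0 eqxx expr0 mul1r mulr1 -addrA subrr addr0.
rewrite mulr0 sub0r -signr_odd; case: (boolP (odd M.+1)) => [_|even_M].
  by rewrite expr1 mulN1r.
by rewrite euler0_eq0 // oppr0 mulr0.
Qed.

Lemma euler1_odd l : odd l -> euler1 l = - euler0 l.
Proof. by move=> odd_l; rewrite /euler1 -signr_odd odd_l expr1 mulN1r. Qed.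

End EulerNumbers.

Section TriangularSystems.
Variable R : numDomainType.
Implicit Types (M : nat -> nat -> R) (x y : nat -> R).

Definition tri_sys (D : nat) M x :=
  forall n, (n <= D)%N -> x n = \sum_(i < n.+1) M n i * x i.

Lemma tri_sys_ext D M x y :
  (forall n, (n <= D)%N -> x n = y n) -> tri_sys D M x -> tri_sys D M y.
Proof.
move=> xy x_sol n le_nD; rewrite -xy // x_sol //.
by apply: eq_bigr => -[i lt_in] _; rewrite xy // (leq_trans _ le_nD).
Qed.

(* Where the diagonal entry is -1 the equation reads 2 x_n = (earlier terms),
   so the solution is determined by its entries at the other indices. *)
Lemma tri_sys_eq D M (free : pred nat) x y :
  tri_sys D M x -> tri_sys D M y ->
  (forall n, (n <= D)%N -> ~~ free n -> M n n = -1) ->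
  (forall n, (n <= D)%N -> free n -> x n = y n) ->
  forall n, (n <= D)%N -> x n = y n.
Proof.
move=> x_sol y_sol diagM xy_free n; elim/ltn_ind: n => n IH le_nD.
have [|not_free] := boolP (free n); first exact: xy_free.
have : x n - y n = \sum_(i < n.+1) M n i * (x i - y i).
  by rewrite x_sol // y_sol // -sumrB; apply: eq_bigr => i _; rewrite mulrBr.
rewrite big_ord_recr /= big1 => [|[i lt_in] _]; last first.
  by rewrite IH ?subrr ?mulr0 // (leq_trans (ltnW lt_in)).
rewrite diagM // add0r mulN1r => /eqP; rewrite -subr_eq0 opprK -mulr2n.
by rewrite mulrn_eq0 /= subr_eq0 => /eqP.
Qed.

Section BasisSolutions.
Variables (D : nat) (M B : nat -> nat -> R) (free : pred nat).
Hypothesis M_diag : forall n, (n <= D)%N -> ~~ free n -> M n n = -1.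
Hypothesis B_small : forall a n, (n < a)%N -> B a n = 0.
Hypothesis B_diag : forall a, B a a = 1.
Hypothesis B_free : forall a n, (a < n <= D)%N -> free a -> free n -> B a n = 0.
Hypothesis B_sol : forall a n, (a <= n <= D)%N -> free a ->
  \sum_(i < n.+1) M n i * B a i = B a n.

(* [B a] is the solution that is 1 at the free index a and 0 at the others. *)
Definition basis_sol x n := \sum_(a < n.+1 | free a) x a * B a n.

Lemma basis_sol_free x n : (n <= D)%N -> free n -> basis_sol x n = x n.
Proof.
move=> le_nD free_n; rewrite /basis_sol big_mkcond big_ord_recr /= free_n B_diag.
rewrite mulr1 big1 ?add0r // => -[a lt_an] _ /=.
by case: ifP => // free_a; rewrite B_free ?mulr0 ?lt_an.
Qed.

Lemma basis_sol_widen x m n : (m <= n)%N ->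
  basis_sol x m = \sum_(a < n.+1 | free a) x a * B a m.
Proof.
move=> le_mn; rewrite /basis_sol big_mkcond [RHS]big_mkcond /=.
apply: (@sum_extend_zero _ (fun a => if free a then x a * B a m else 0)) => //.
by move=> a /andP [lt_ma _]; rewrite B_small ?mulr0 ?if_same.
Qed.

Lemma basis_sol_tri_sys x : tri_sys D M (basis_sol x).
Proof.
move=> n le_nD.
have -> : \sum_(i < n.+1) M n i * basis_sol x i =
    \sum_(i < n.+1) \sum_(a < n.+1 | free a) M n i * (x a * B a i).
  apply: eq_bigr => -[i /=]; rewrite ltnS => le_in _.
  by rewrite (basis_sol_widen x le_in) mulr_sumr.
rewrite exchange_big; apply: eq_bigr => -[a /=]; rewrite ltnS => le_an free_a.
rewrite -B_sol ?le_an // mulr_sumr; apply: eq_bigr => i _.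
by rewrite mulrCA.
Qed.

Lemma tri_sys_basisP x : tri_sys D M x <->
  forall n, (n <= D)%N -> ~~ free n -> x n = basis_sol x n.
Proof.
split=> [x_sol n le_nD _ | x_eq].
  apply: (tri_sys_eq x_sol (basis_sol_tri_sys x) M_diag) => // m le_mD free_m.
  by rewrite basis_sol_free.
apply: (@tri_sys_ext D M (basis_sol x)); last exact: basis_sol_tri_sys.
move=> n le_nD; case: (boolP (free n)) => [/(basis_sol_free x le_nD) -> //|].
by move/(x_eq n le_nD) <-.
Qed.

End BasisSolutions.

End TriangularSystems.

Section HighSystem.
Variable K : numFieldType.
Implicit Types (p : bool) (b : nat -> K).

Definition high_mx p (N I : nat) : K := (-1) ^+ p * ((-1) ^+ I * 'C(N, I)%:R).
Definition high_basis (a N : nat) : K := 'C(N, a)%:R * euler1 K (N - a).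

Lemma high_mx_diag p N : odd N != p -> high_mx p N N = -1.
Proof.
rewrite /high_mx binn mulr1 -[(-1) ^+ N]signr_odd -signr_addb.
by case: p; case: (odd N).
Qed.

Lemma high_basis_small a N : (N < a)%N -> high_basis a N = 0.
Proof. by move=> lt_Na; rewrite /high_basis bin_small ?mul0r. Qed.

Lemma high_basis_diag a : high_basis a a = 1.
Proof. by rewrite /high_basis binn subnn /euler1 euler0_0 !mulr1. Qed.

Lemma high_basis_eq0 a N : (a < N)%N -> odd a = odd N -> high_basis a N = 0.
Proof.
move=> lt_aN odd_aN; rewrite /high_basis /euler1 euler0_eq0 ?mulr0 ?subn_gt0 //.
by rewrite oddB ?(ltnW lt_aN) // odd_aN addbb.
Qed.

(* Since sum_l C(M, l) E_l(0) = (-1)^M E_M(0), the signed binomial transform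
   maps each basis sequence to itself up to the sign (-1)^a. *)
Lemma high_basis_eigen a N : (a <= N)%N ->
  \sum_(I < N.+1) (-1) ^+ I * 'C(N, I)%:R * high_basis a I =
  (-1) ^+ a * high_basis a N.
Proof.
move=> le_aN.
rewrite (@sum_drop_zero_prefix _ (fun I => (-1) ^+ I * 'C(N, I)%:R * high_basis a I) a)
  ?(leq_trans le_aN) //; last by move=> I lt_Ia; rewrite high_basis_small ?mulr0.
rewrite subSn // {2}/high_basis [euler1 _ _]/euler1 -euler0_binom_sum !mulr_sumr.
apply: eq_bigr => -[l /=]; rewrite ltnS => le_l _.
rewrite /high_basis /euler1 addKn exprD.
have bin_l : ('C(N, a + l) * 'C(a + l, a) = 'C(N, a) * 'C(N - a, l))%N.
  by rewrite bin_trinomial ?leq_addr ?addKn //; lia.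
transitivity ((-1) ^+ a * ((-1) ^+ l * (-1) ^+ l) *
  ('C(N, a + l) * 'C(a + l, a))%:R * euler0 K l); first by rewrite natrM; ring.
by rewrite -expr2 sqrr_sign mulr1 bin_l natrM; ring.
Qed.

Lemma high_sysP p b : (forall D, tri_sys D (high_mx p) b) <->
  forall N, odd N != p -> b N = basis_sol high_basis (fun a => odd a == p) b N.
Proof.
have basisP D : tri_sys D (high_mx p) b <-> forall N, (N <= D)%N -> odd N != p ->
    b N = basis_sol high_basis (fun a => odd a == p) b N.
  apply: tri_sys_basisP
    => [N _|a N|a|a N /andP [lt_aN _] /eqP<- /eqP|a N /andP [le_aN _] /eqP<-].
  - exact: high_mx_diag.
  - exact: high_basis_small.
  - exact: high_basis_diag.
  - by move/esym/high_basis_eq0; apply.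
  - rewrite -[RHS](signrMK a) -high_basis_eigen // mulr_sumr -signr_odd.
    by apply: eq_bigr => I _; rewrite /high_mx !mulrA.
split=> [b_sol N | b_eq D]; first exact: (proj1 (basisP N) (b_sol N) N (leqnn N)).
by apply/basisP => N _; apply: b_eq.
Qed.

End HighSystem.

Section LowSystem.
Variables (K : numFieldType) (D : nat).

Definition low_mx (n i : nat) : K := (-1) ^+ n * 'C(D - i, n - i)%:R.
Definition low_basis (a n : nat) : K :=
  if (a <= n)%N then 'C(D - a, n - a)%:R * euler0 K (n - a) else 0.

Lemma low_mx_diag n : odd n -> low_mx n n = -1.
Proof. by move=> odd_n; rewrite /low_mx subnn bin0 mulr1 -signr_odd odd_n. Qed.

Lemma low_basis_small a n : (n < a)%N -> low_basis a n = 0.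
Proof. by move=> lt_na; rewrite /low_basis leqNgt lt_na. Qed.

Lemma low_basis_diag a : low_basis a a = 1.
Proof. by rewrite /low_basis leqnn subnn bin0 euler0_0 mulr1. Qed.

Lemma low_basis_eq0 a n : (a < n)%N -> ~~ odd a -> ~~ odd n -> low_basis a n = 0.
Proof.
move=> lt_an even_a even_n; rewrite /low_basis ltnW // euler0_eq0 ?mulr0 ?subn_gt0 //.
by rewrite oddB ?(ltnW lt_an) // (negbTE even_a) (negbTE even_n).
Qed.

Lemma low_basis_eigen a n : (a <= n)%N -> (n <= D)%N ->
  \sum_(i < n.+1) low_mx n i * low_basis a i = (-1) ^+ a * low_basis a n.
Proof.
move=> le_an le_nD.
rewrite (@sum_drop_zero_prefix _ (fun i => low_mx n i * low_basis a i) a)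
  ?(leq_trans le_an) //; last by move=> i lt_ia; rewrite low_basis_small ?mulr0.
rewrite subSn // {2}/low_basis le_an -[euler0 K (n - a)](signrMK (n - a)).
rewrite -euler0_binom_sum !mulr_sumr; apply: eq_bigr => -[l /=]; rewrite ltnS => le_l _.
rewrite /low_mx /low_basis leq_addr addKn.
have bin_l : ('C(D - a, n - a) * 'C(n - a, l) =
    'C(D - (a + l), n - (a + l)) * 'C(D - a, l))%N.
  by rewrite bin_trinomial ?leq_sub2r // mulnC !subnDA.
have sign_n : (-1) ^+ n = (-1) ^+ a * (-1) ^+ (n - a) :> K by rewrite -exprD subnKC.
transitivity ((-1) ^+ n * ('C(D - (a + l), n - (a + l)) * 'C(D - a, l))%:R * euler0 K l).
  by rewrite natrM; ring.
by rewrite -bin_l natrM sign_n; ring.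
Qed.

Lemma low_sysP f : tri_sys D low_mx f <->
  forall n, (n <= D)%N -> odd n -> f n = basis_sol low_basis (fun a => ~~ odd a) f n.
Proof.
rewrite (@tri_sys_basisP _ D low_mx low_basis (fun a => ~~ odd a)).
- by split=> f_eq n le_nD; rewrite ?negbK => odd_n; apply: f_eq; rewrite ?negbK.
- by move=> n _ /negPn; apply: low_mx_diag.
- exact: low_basis_small.
- exact: low_basis_diag.
- by move=> a n /andP [lt_an _]; apply: low_basis_eq0.
- move=> a n /andP [le_an le_nD] even_a.
  by rewrite low_basis_eigen // -signr_odd (negbTE even_a) mul1r.
Qed.

End LowSystem.

Section Decoupling.
Variable K : numFieldType.
Implicit Types f : ps K.
Local Notation pw := (ps_1mX_pow K).

Lemma gZ_subn f (N E : nat) :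
  gZ f (N%:Z - E%:Z) = if (E <= N)%N then f (N - E)%N else 0.
Proof.
case: leqP => [le_EN|lt_NE]; first by rewrite subzn.
by have -> : N%:Z - E%:Z = Negz (E - N).-1 by rewrite NegzE; lia.
Qed.

Definition shift_coef (r : int) f (N : nat) : K := gZ f (N%:Z + 1 - r).

Lemma in_F_pos (E : nat) f :
  in_F E.+1 f <-> forall D, tri_sys D (high_mx K (odd E)) (shift_coef E.+1 f).
Proof.
have shiftE N : shift_coef E.+1 f N = if (E <= N)%N then f (N - E)%N else 0.
  by rewrite /shift_coef -gZ_subn; congr gZ; lia.
have row_eq n :
    \sum_(I < (n + E).+1) high_mx K (odd E) (n + E) I * shift_coef E.+1 f I =
    \sum_(i < n.+1) f i * ((-1) ^+ i * pw (- E.+1%:Z - i%:Z) (n - i)%N).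
  rewrite (@sum_drop_zero_prefix _
    (fun I => high_mx K (odd E) (n + E) I * shift_coef E.+1 f I) E);
    [|lia| by move=> k lt_kE; rewrite shiftE leqNgt lt_kE mulr0].
  have -> : ((n + E).+1 - E = n.+1)%N by lia.
  apply: eq_bigr => -[l /=]; rewrite ltnS => le_ln _.
  have -> : - E.+1%:Z - l%:Z = Negz (E + l) by rewrite NegzE; lia.
  rewrite coef_ps_1mX_pow_Negz shiftE leq_addr addKn /high_mx.
  have -> : (E + l + (n - l) = n + E)%N by lia.
  rewrite -bin_sub; last by lia.
  have -> : (n + E - (E + l) = n - l)%N by lia.
  rewrite exprD -[(-1) ^+ E]signr_odd.
  transitivity ((-1) ^+ odd E * (-1) ^+ odd E * ((-1) ^+ l * 'C(n + E, n - l)%:R * f l)).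
    by ring.
  by rewrite -signr_addb addbb mul1r; ring.
rewrite in_F_coefE; split=> [f_eq D N _ | sys n].
  case: (leqP E N) => [le_EN|lt_NE].
    by rewrite -(subnK le_EN) row_eq shiftE leq_addl addnK f_eq.
  rewrite shiftE leqNgt lt_NE big1 // => -[I lt_IN] _.
  by rewrite shiftE ifF ?mulr0 //; apply/negbTE; rewrite -ltnNge (leq_trans lt_IN).
by rewrite -row_eq -(sys (n + E)%N) // shiftE leq_addl addnK.
Qed.

Lemma in_F_nonpos (D0 : nat) f : in_F (- D0%:Z) f <->
  (forall D, tri_sys D (high_mx K (~~ odd D0)) (shift_coef (- D0%:Z) f)) /\
  tri_sys D0 (low_mx K D0) f.
Proof.
have shiftE N : shift_coef (- D0%:Z) f N = f (N + D0).+1.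
  by rewrite /shift_coef; have -> : N%:Z + 1 - - D0%:Z = (N + D0).+1 by lia.
have high_row N :
    \sum_(i < (N + D0).+2) f i * ((-1) ^+ i * pw (- - D0%:Z - i%:Z) ((N + D0).+1 - i)%N)
    = \sum_(I < N.+1) high_mx K (~~ odd D0) N I * shift_coef (- D0%:Z) f I.
  rewrite (@sum_drop_zero_prefix _
    (fun i => f i * ((-1) ^+ i * pw (- - D0%:Z - i%:Z) ((N + D0).+1 - i)%N)) D0.+1);
    [|lia|]; last first.
    move=> k lt_kD; have -> : - - D0%:Z - k%:Z = (D0 - k)%N by lia.
    by rewrite coef_ps_1mX_pow_nat bin_small ?mulr0 //; lia.
  have -> : ((N + D0).+2 - D0.+1 = N.+1)%N by lia.
  apply: eq_bigr => -[l /=]; rewrite ltnS => le_lN _.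
  have -> : - - D0%:Z - (D0.+1 + l)%N%:Z = Negz l by rewrite NegzE; lia.
  have -> : ((N + D0).+1 - (D0.+1 + l) = N - l)%N by lia.
  rewrite coef_ps_1mX_pow_Negz shiftE /high_mx subnKC // bin_sub //.
  have -> : (l + D0).+1 = (D0.+1 + l)%N by lia.
  by rewrite exprD -signr_odd signrN /= signr_odd; ring.
have low_row n : (n <= D0)%N ->
    \sum_(i < n.+1) f i * ((-1) ^+ i * pw (- - D0%:Z - i%:Z) (n - i)%N) =
    \sum_(i < n.+1) low_mx K D0 n i * f i.
  move=> le_nD; apply: eq_bigr => -[i /=]; rewrite ltnS => le_in _.
  have -> : - - D0%:Z - i%:Z = (D0 - i)%N by lia.
  by rewrite coef_ps_1mX_pow_nat /low_mx mulrA -exprD subnKC // mulrC.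
rewrite in_F_coefE; split=> [f_eq | [high low] n].
  split=> [D N _ | n le_nD]; first by rewrite shiftE f_eq high_row.
  by rewrite -low_row.
case: (leqP n D0) => [le_nD|lt_Dn]; first by rewrite low_row //; apply: low.
have -> : n = (n - D0.+1 + D0).+1%N by lia.
by rewrite high_row -shiftE; apply: high.
Qed.

Lemma in_F_tri_sys r f : in_F r f <->
  (forall D, tri_sys D (high_mx K (~~ odd `|r|)) (shift_coef r f)) /\
  (r <= 0 -> tri_sys `|r| (low_mx K `|r|) f).
Proof.
case: r => [[|E]|D0].
- rewrite -[Posz 0]/(- 0%N%:Z) in_F_nonpos.
  by split=> [[high low]|[high low]]; split=> //; apply: low.
- rewrite in_F_pos /= negbK.
  by split=> [high|[]//]; split.
- rewrite NegzE in_F_nonpos abszN; split=> [[high low]|[high low]]; split=> //.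
  by apply: low; rewrite oppr_le0.
Qed.

End Decoupling.

Section EulerBrackets.
Variable K : numFieldType.
Implicit Types f : ps K.

Lemma coef_Xn_sub_euler_poly n j :
  odd (n - j) -> ('X^n - euler_poly K n)`_j = high_basis K j n.
Proof.
move=> odd_nj; have lt_jn : (j < n)%N by rewrite -subn_gt0; case: (n - j)%N odd_nj.
rewrite coefB coefXn ltn_eqF // sub0r coef_euler_poly /high_basis euler1_odd //.
by rewrite mulrN.
Qed.

Lemma ebrack_high_basis (m t : nat) : ebrack K m t.+1 = high_basis K t.*2.+1 m.*2.
Proof.
rewrite /ebrack lez_nat lez_nat /=; case: (leqP t.+1 m) => [le_tm|lt_mt].
  have -> : ((1 + 1) * t.+1 - 1 = t.*2.+1)%N by lia.
  rewrite /brack_poly coef_Xn_sub_euler_poly // oddB /= ?odd_double //.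
  by rewrite ltn_double.
by rewrite high_basis_small // ltnS leq_double.
Qed.

Lemma ebrace_high_basis (m t : nat) : ebrace K m t = high_basis K t.*2 m.*2.+1.
Proof.
rewrite /ebrace lez_nat lez_nat /=; case: (leqP t m) => [le_tm|lt_mt].
  have -> : ((1 + 1) * t = t.*2)%N by lia.
  rewrite /brace_poly coef_Xn_sub_euler_poly // oddB /= ?odd_double //.
  by rewrite leqW ?leq_double.
by rewrite high_basis_small //; lia.
Qed.

(* At t = 0 the index t.*2.-1 truncates to 0, where the coefficient vanishes. *)
Lemma high_sys_even (b : nat -> K) : (forall D, tri_sys D (high_mx K true) b) <->
  forall m : nat, b m.*2 = \sum_(t < m.+1) ebrack K m t * b t.*2.-1.
Proof.
have solE m : basis_sol (high_basis K) (fun a => odd a == true) b m.*2 =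
    \sum_(t < m.+1) ebrack K m t * b t.*2.-1.
  rewrite /basis_sol (eq_bigl (fun a : 'I__ => odd a)) => [|a]; last exact: eqb_id.
  rewrite (sum_odd_ord (fun a => b a * high_basis K a m.*2)) big_ord_recl mul0r add0r.
  by apply: eq_bigr => t _; rewrite ebrack_high_basis mulrC.
rewrite high_sysP; split=> [b_eq m | b_eq N]; first by rewrite b_eq ?odd_double // solE.
rewrite eqb_id => /negbTE even_N.
by rewrite -[N]odd_double_half even_N add0n solE b_eq.
Qed.

Lemma high_sys_odd (b : nat -> K) : (forall D, tri_sys D (high_mx K false) b) <->
  forall m : nat, b m.*2.+1 = \sum_(t < m.+1) ebrace K m t * b t.*2.
Proof.
have solE m : basis_sol (high_basis K) (fun a => odd a == false) b m.*2.+1 =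
    \sum_(t < m.+1) ebrace K m t * b t.*2.
  rewrite /basis_sol (eq_bigl (fun a : 'I__ => ~~ odd a)) => [|a]; last exact: eqbF_neg.
  rewrite (sum_even_ord (fun a => b a * high_basis K a m.*2.+1)).
  by apply: eq_bigr => t _; rewrite ebrace_high_basis mulrC.
rewrite high_sysP; split=> [b_eq m | b_eq N]; first by rewrite b_eq /= ?odd_double // solE.
rewrite eqbF_neg negbK => odd_N.
by rewrite -[N]odd_double_half odd_N add1n solE b_eq.
Qed.

Lemma low_sys_odd_entries D f : tri_sys D (low_mx K D) f <->
  forall n, (n.*2.+1 <= D)%N ->
    f n.*2.+1 = \sum_(t < n.+1) low_basis K D t.*2 n.*2.+1 * f t.*2.
Proof.
have solE n : basis_sol (low_basis K D) (fun a => ~~ odd a) f n.*2.+1 =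
    \sum_(t < n.+1) low_basis K D t.*2 n.*2.+1 * f t.*2.
  rewrite /basis_sol (sum_even_ord (fun a => f a * low_basis K D a n.*2.+1)).
  by apply: eq_bigr => t _; rewrite mulrC.
rewrite low_sysP; split=> [f_eq n le_nD | f_eq n le_nD odd_n].
  by rewrite f_eq /= ?odd_double // solE.
by move: le_nD; rewrite -[n]odd_double_half odd_n add1n solE => /f_eq.
Qed.

Lemma low_basis_ebrack L n t : (t <= n)%N -> (n < L)%N ->
  low_basis K L.*2 t.*2 n.*2.+1 = - ebrack K (L - t)%N (L - n)%N.
Proof.
move=> le_tn lt_nL; have -> : (L - n = (L - n.+1).+1)%N by lia.
rewrite ebrack_high_basis /low_basis /high_basis euler1_odd; last first.
  have -> : ((L - t).*2 - (L - n.+1).*2.+1 = (n - t).*2.+1)%N by lia.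
  by rewrite /= odd_double.
rewrite ifT; last by lia.
rewrite -bin_sub; last by lia.
have -> : ((L - t).*2 - (L - n.+1).*2.+1 = n.*2.+1 - t.*2)%N by lia.
by rewrite mulrN opprK -!doubleB; congr (_%:R * _); congr 'C(_, _); lia.
Qed.

Lemma low_basis_ebrace M n t : (t <= n)%N -> (n <= M)%N ->
  low_basis K M.*2.+1 t.*2 n.*2.+1 = - ebrace K (M - t)%N (M - n)%N.
Proof.
move=> le_tn le_nM.
rewrite ebrace_high_basis /low_basis /high_basis euler1_odd; last first.
  have -> : ((M - t).*2.+1 - (M - n).*2 = (n - t).*2.+1)%N by lia.
  by rewrite /= odd_double.
rewrite ifT; last by lia.
rewrite -bin_sub; last by lia.
have -> : ((M - t).*2.+1 - (M - n).*2 = n.*2.+1 - t.*2)%N by lia.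
by rewrite mulrN opprK; congr (_%:R * _); congr 'C(_, _); lia.
Qed.

End EulerBrackets.

Section IntegerIndices.
Variable K : numFieldType.
Implicit Types f : ps K.

Lemma gZ_neg f x : x < 0 -> gZ f x = 0.
Proof. by case: x. Qed.

Lemma zsum_nat (a : int) (m : nat) (F : int -> K) :
  zsum a (a + m%:Z) F = \sum_(t < m.+1) F (a + t%:Z).
Proof.
rewrite /zsum ifT ?lerDl //; have -> : `|(a + m%:Z - a + 1)%R|%N = m.+1 by lia.
by rewrite big_mkord.
Qed.

Lemma high_reindex (k : int) (c : int -> int -> K) f :
  (forall m : nat, gZ f (2 * (m%:Z - k) + 1) =
     \sum_(t < m.+1) c m t * gZ f (2 * (t%:Z - k))) <->
  (forall n : int, 0 <= n -> - k <= n ->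
     gZ f (2 * n + 1) = zsum (- k) n (fun i => c (n + k) (i + k) * gZ f (2 * i))).
Proof.
have zsumE (m : nat) :
    zsum (- k) (m%:Z - k) (fun i => c (m%:Z - k + k) (i + k) * gZ f (2 * i)) =
    \sum_(t < m.+1) c m t * gZ f (2 * (t%:Z - k)).
  rewrite subrK addrC zsum_nat; apply: eq_bigr => t _.
  by rewrite [- k + _]addrC subrK.
split=> [eq_m n n_ge0 le_kn | eq_n m].
  have [m ->] : exists m : nat, n = m%:Z - k by exists `|(n + k)%R|%N; lia.
  by rewrite zsumE eq_m.
case: (lerP k m%:Z) => [le_km | lt_mk]; first by rewrite eq_n ?zsumE //; lia.
rewrite gZ_neg; last by lia.
rewrite big1 // => t _; rewrite gZ_neg ?mulr0 //.
by have := ltn_ord t; lia.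
Qed.

Lemma low_reindex (L : nat) (c : int -> int -> K) f :
  (forall n : nat, (n < L)%N -> f n.*2.+1 = \sum_(t < n.+1) c n t * f t.*2) <->
  (forall n : int, 0 <= n -> n <= L%:Z - 1 ->
     gZ f (2 * n + 1) = zsum 0 n (fun i => c n i * gZ f (2 * i))).
Proof.
have zsumE (n : nat) : zsum 0 n (fun i => c n i * gZ f (2 * i)) =
    \sum_(t < n.+1) c n t * f t.*2.
  rewrite -[n%:Z]add0r zsum_nat; apply: eq_bigr => t _; rewrite add0r.
  by have -> : 2 * t%:Z = t.*2 by lia.
have oddE (n : nat) : gZ f (2 * n%:Z + 1) = f n.*2.+1.
  by have -> : 2 * n%:Z + 1 = n.*2.+1 by lia.
split=> [eq_n [m _ le_mL|//] | eq_n n lt_nL].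
  by rewrite zsumE oddE eq_n //; lia.
by rewrite -oddE eq_n ?zsumE //; lia.
Qed.

End IntegerIndices.

Section ParityCases.
Variable K : numFieldType.
Implicit Types f : ps K.

Lemma high_sys_evenZ k f :
  (forall D, tri_sys D (high_mx K true) (shift_coef (2 * k) f)) <->
  (forall n : int, 0 <= n -> - k <= n ->
     gZ f (2 * n + 1) = zsum (- k) n (fun i => ebrack K (n + k) (i + k) * gZ f (2 * i))).
Proof.
rewrite high_sys_even -high_reindex.
have lhsE (m : nat) : shift_coef (2 * k) f m.*2 = gZ f (2 * (m%:Z - k) + 1).
  by rewrite /shift_coef; congr gZ; lia.
have rhsE (m : nat) :
    \sum_(t < m.+1) ebrack K m t * shift_coef (2 * k) f t.*2.-1 =
    \sum_(t < m.+1) ebrack K m t * gZ f (2 * (t%:Z - k)).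
  apply: eq_bigr => -[[|t] _] _ /=; first by rewrite /ebrack !mul0r.
  by rewrite /shift_coef; congr (_ * gZ f _); lia.
by split=> eq_m m; move: (eq_m m); rewrite lhsE rhsE.
Qed.

Lemma high_sys_oddZ k f :
  (forall D, tri_sys D (high_mx K false) (shift_coef (2 * k + 1) f)) <->
  (forall n : int, 0 <= n -> - k <= n ->
     gZ f (2 * n + 1) = zsum (- k) n (fun i => ebrace K (n + k) (i + k) * gZ f (2 * i))).
Proof.
rewrite high_sys_odd -high_reindex.
have lhsE (m : nat) : shift_coef (2 * k + 1) f m.*2.+1 = gZ f (2 * (m%:Z - k) + 1).
  by rewrite /shift_coef; congr gZ; lia.
have rhsE (m : nat) :
    \sum_(t < m.+1) ebrace K m t * shift_coef (2 * k + 1) f t.*2 =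
    \sum_(t < m.+1) ebrace K m t * gZ f (2 * (t%:Z - k)).
  by apply: eq_bigr => t _; rewrite /shift_coef; congr (_ * gZ f _); lia.
by split=> eq_m m; move: (eq_m m); rewrite lhsE rhsE.
Qed.

Lemma low_sys_evenZ L f : tri_sys L.*2 (low_mx K L.*2) f <->
  (forall n : int, 0 <= n -> n <= L%:Z - 1 ->
     gZ f (2 * n + 1) =
     zsum 0 n (fun i => - ebrack K (L%:Z - i) (L%:Z - n) * gZ f (2 * i))).
Proof.
rewrite low_sys_odd_entries -(low_reindex L (fun n i => - ebrack K (L%:Z - i) (L%:Z - n))).
have rowE n : (n < L)%N ->
    \sum_(t < n.+1) low_basis K L.*2 t.*2 n.*2.+1 * f t.*2 =
    \sum_(t < n.+1) - ebrack K (L%:Z - t%:Z) (L%:Z - n%:Z) * f t.*2.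
  move=> lt_nL; apply: eq_bigr => -[t /=]; rewrite ltnS => le_tn _.
  by rewrite low_basis_ebrack // !subzn //; lia.
split=> eq_n n; first by move=> lt_nL; rewrite -rowE // eq_n // ltn_double.
by rewrite ltn_double => lt_nL; rewrite rowE // eq_n.
Qed.

Lemma low_sys_oddZ M f : tri_sys M.*2.+1 (low_mx K M.*2.+1) f <->
  (forall n : int, 0 <= n -> n <= M.+1%:Z - 1 ->
     gZ f (2 * n + 1) =
     zsum 0 n (fun i => - ebrace K (M.+1%:Z - i - 1) (M.+1%:Z - n - 1) * gZ f (2 * i))).
Proof.
rewrite low_sys_odd_entries.
rewrite -(low_reindex M.+1 (fun n i => - ebrace K (M.+1%:Z - i - 1) (M.+1%:Z - n - 1))).
have rowE n : (n <= M)%N ->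
    \sum_(t < n.+1) low_basis K M.*2.+1 t.*2 n.*2.+1 * f t.*2 =
    \sum_(t < n.+1) - ebrace K (M.+1%:Z - t%:Z - 1) (M.+1%:Z - n%:Z - 1) * f t.*2.
  move=> le_nM; apply: eq_bigr => -[t /=]; rewrite ltnS => le_tn _.
  have -> : M.+1%:Z - t%:Z - 1 = (M - t)%N by lia.
  have -> : M.+1%:Z - n%:Z - 1 = (M - n)%N by lia.
  by rewrite low_basis_ebrace.
split=> eq_n n; first by move=> le_nM; rewrite -rowE // eq_n // ltnS leq_double.
by rewrite ltnS leq_double => le_nM; rewrite rowE // eq_n.
Qed.

Lemma in_F_even k f : in_F (2 * k) f <->
  (forall n : int, 0 <= n -> - k <= n ->
     gZ f (2 * n + 1) = zsum (- k) n (fun i => ebrack K (n + k) (i + k) * gZ f (2 * i)))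
  /\ (k < 0 -> forall n : int, 0 <= n -> n <= - k - 1 ->
     gZ f (2 * n + 1) = zsum 0 n (fun i => - ebrack K (- k - i) (- k - n) * gZ f (2 * i))).
Proof.
have absE : `|(2 * k)%R|%N = `|k|%N.*2 by lia.
rewrite in_F_tri_sys absE odd_double /= high_sys_evenZ.
split=> [[high low] | [high low]]; split=> //.
  move=> k_lt0; have -> : - k = `|k|%N by lia.
  by apply/low_sys_evenZ/low; lia.
move=> k_le0; apply/low_sys_evenZ; have -> : `|k|%:Z = - k by lia.
by move=> n n_ge0 le_n; apply: low => //; lia.
Qed.

Lemma in_F_odd k f : in_F (2 * k + 1) f <->
  (forall n : int, 0 <= n -> - k <= n ->
     gZ f (2 * n + 1) = zsum (- k) n (fun i => ebrace K (n + k) (i + k) * gZ f (2 * i)))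
  /\ (k < 0 -> forall n : int, 0 <= n -> n <= - k - 1 ->
     gZ f (2 * n + 1) =
     zsum 0 n (fun i => - ebrace K (- k - i - 1) (- k - n - 1) * gZ f (2 * i))).
Proof.
have [M absE] : exists M, `|(2 * k + 1)%R|%N = M.*2.+1.
  by case: (ltrP k 0) => ?; [exists (`|k|.-1)%N | exists `|k|%N]; lia.
rewrite in_F_tri_sys absE /= odd_double /= high_sys_oddZ.
split=> [[high low] | [high low]]; split=> //.
  move=> k_lt0; have -> : - k = M.+1 by lia.
  by apply/low_sys_oddZ/low; lia.
move=> k_le0; apply/low_sys_oddZ; have -> : M.+1%:Z = - k by lia.
by move=> n n_ge0 le_n; apply: low => //; lia.
Qed.

End ParityCases.

Unset Implicit Arguments.

Theorem theorem5p3 (K : numFieldType) (gam : ps K) (r : int) :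
  in_F r gam <->
  ((forall k : int, r = 2 * k ->
      (forall n : int, 0 <= n -> - k <= n ->
         gZ gam (2 * n + 1) =
         zsum (- k) n (fun i => ebrack K (n + k) (i + k) * gZ gam (2 * i)))
      /\ (k < 0 -> forall n : int, 0 <= n -> n <= - k - 1 ->
         gZ gam (2 * n + 1) =
         zsum 0 n (fun i => - ebrack K (- k - i) (- k - n) * gZ gam (2 * i))))
   /\
   (forall k : int, r = 2 * k + 1 ->
      (forall n : int, 0 <= n -> - k <= n ->
         gZ gam (2 * n + 1) =
         zsum (- k) n (fun i => ebrace K (n + k) (i + k) * gZ gam (2 * i)))
      /\ (k < 0 -> forall n : int, 0 <= n -> n <= - k - 1 ->
         gZ gam (2 * n + 1) =
         zsum 0 n (fun i => - ebrace K (- k - i - 1) (- k - n - 1) * gZ gam (2 * i))))).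
Proof.
have [k [->|->]] : exists k, r = 2 * k \/ r = 2 * k + 1 by exists (r %/ 2)%Z; lia.
- rewrite in_F_even; split=> [cond_k | [cond _]]; last exact: cond.
  by split=> k' eq_k; [have <- : k = k' by lia | lia].
- rewrite in_F_odd; split=> [cond_k | [_ cond]]; last exact: cond.
  by split=> k' eq_k; [lia | have <- : k = k' by lia].
Qed.
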